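(* Let $\mathcal{U},\mathcal{Y}$ be Hilbert spaces, $\mathcal{F}$ a closed subspace of $\mathcal{U}$, and $\omega=\begin{pmatrix}\omega_1\\ \omega_2\end{pmatrix}:\mathcal{F}\to\mathcal{Y}\oplus\mathcal{U}$ a contraction. If either $\omega_1$ is a strict contraction (i.e. $\|\omega_1\|<1$) or $\dim(\mathcal{U})<\infty$, then the condition ''$\omega_1(\Pi_{\mathcal{F}}\omega_2)^n:\mathcal{F}\to\mathcal{Y}$ is a co-isometry for every $n=0,1,2,\ldots$'' is equivalent to $\mathcal{Y}=\{0\}$.
   Context: $\Pi_{\mathcal{F}}:\mathcal{U}\to\mathcal{F}$ is the orthogonal projection. *)

From mathcomp Require Import all_boot all_order all_algebra.
From mathcomp Require Import reals realfun complex.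
Set Implicit Arguments. Unset Strict Implicit. Unset Printing Implicit Defensive.
Import Order.TTheory GRing.Theory Num.Theory.
Local Open Scope ring_scope.

Section Hilbert.
Variable C : numClosedFieldType.

Section OneSpace.
Variable V : lmodType C.
Variable ip : V -> V -> C.

Definition inner_product : Prop :=
  [/\ forall a x y z, ip (a *: x + y) z = a * ip x z + ip y z,
      forall x y, ip y x = (ip x y)^*,
      forall x, 0 <= ip x x &
      forall x, ip x x = 0 -> x = 0].

Definition ipnorm (x : V) : C := sqrtC (ip x x).

Definition converges_to (u : nat -> V) (l : V) : Prop :=
  forall eps : C, 0 < eps -> exists N, forall n, (N <= n)%N -> ipnorm (u n - l) < eps.

Definition cauchy (u : nat -> V) : Prop :=
  forall eps : C, 0 < eps -> exists N, forall m n, (N <= m)%N -> (N <= n)%N ->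
    ipnorm (u m - u n) < eps.

Definition ip_complete : Prop :=
  forall u : nat -> V, cauchy u -> exists l, converges_to u l.

Definition hilbert_space : Prop := inner_product /\ ip_complete.

Definition closed_subspace (F : V -> Prop) : Prop :=
  [/\ F 0,
      forall a x y, F x -> F y -> F (a *: x + y) &
      forall u l, (forall n, F (u n)) -> converges_to u l -> F l].

Definition orth_proj (F : V -> Prop) (P : V -> V) : Prop :=
  forall x, F (P x) /\ (forall f, F f -> ip (x - P x) f = 0).

Definition finite_dim : Prop :=
  exists n (b : 'I_n -> V), forall x, exists c : 'I_n -> C, x = \sum_(i < n) c i *: b i.

End OneSpace.

Section Operators.
Variables (U Y : lmodType C).

(* T : F -> Y is linear (F a subspace of U; values of T off F are irrelevant) *)
Definition linear_on (F : U -> Prop) (T : U -> Y) : Prop :=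
  forall a x y, F x -> F y -> T (a *: x + y) = a *: T x + T y.

(* T : F -> Y is a co-isometry: T T^* = I, where T^* : Y -> F is the adjoint *)
Definition coisometry_on (ipU : U -> U -> C) (F : U -> Prop)
    (ipY : Y -> Y -> C) (T : U -> Y) : Prop :=
  exists S : Y -> U,
    [/\ forall y, F (S y),
        forall x y, F x -> ipY (T x) y = ipU x (S y) &
        forall y, T (S y) = y].

Definition strict_contraction_on (ipU : U -> U -> C) (F : U -> Prop)
    (ipY : Y -> Y -> C) (T : U -> Y) : Prop :=
  exists c : C, c < 1 /\ forall x, F x -> ipnorm ipY (T x) <= c * ipnorm ipU x.
End Operators.

Definition contraction2_on (U Y : lmodType C) (ipU : U -> U -> C) (F : U -> Prop)
    (ipY : Y -> Y -> C) (w1 : U -> Y) (w2 : U -> U) : Prop :=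
  [/\ linear_on F w1, linear_on F w2 &
      forall x, F x -> sqrtC (ipY (w1 x) (w1 x) + ipU (w2 x) (w2 x)) <= ipnorm ipU x].

End Hilbert.

(* A co-isometry [T] with adjoint [S] satisfies [T S = 1] and [|S y| = |y|].
   If [|w1| <= c < 1] then [|y| = |w1 (S y)| <= c |y|] forces [y = 0].
   If [dim U = m], let [A := Pi_F w2], a contraction of [F], take [x := S y]
   for the co-isometry [w1 A^m] and [z := A^m x].  Then
   [|y|^2 + |w2 z|^2 <= |z|^2 <= |x|^2 = |y|^2], so [w2 z = 0], i.e.
   [A^(m+1) x = 0], while [A^m x <> 0] as soon as [y <> 0]: the vectors
   [x, A x, ..., A^m x] would be [m+1] independent vectors in an
   [m]-dimensional space. *)
From HB Require Import structures.
From mathcomp Require Import all_boot all_order all_algebra.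
From mathcomp Require Import reals realfun complex.
From mathcomp Require Import zify.
Import Order.TTheory GRing.Theory Num.Theory.
Set Implicit Arguments. Unset Strict Implicit. Unset Printing Implicit Defensive.
Local Open Scope ring_scope.

Section InnerProduct.
Variables (C : numClosedFieldType) (V : lmodType C) (ip : V -> V -> C).
Hypothesis hip : inner_product ip.

Lemma ip0l z : ip 0 z = 0.
Proof.
case: hip => h _ _ _; have := h 1 0 0 z; rewrite scale1r addr0 mul1r.
by move/esym/eqP; rewrite -subr_eq0 addrK => /eqP.
Qed.

Lemma ipDl x y z : ip (x + y) z = ip x z + ip y z.
Proof. by case: hip => h _ _ _; rewrite -[x in LHS]scale1r h mul1r. Qed.

Lemma ipZl a x z : ip (a *: x) z = a * ip x z.
Proof. by case: hip => h _ _ _; rewrite -[_ *: _]addr0 h ip0l addr0. Qed.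

Lemma ipBl x y z : ip (x - y) z = ip x z - ip y z.
Proof. by rewrite ipDl -scaleN1r ipZl mulN1r. Qed.

Lemma ipC x y : ip y x = (ip x y)^*.
Proof. by case: hip. Qed.

Lemma ip0r z : ip z 0 = 0.
Proof. by rewrite ipC ip0l rmorph0. Qed.

Lemma ipDr x y z : ip z (x + y) = ip z x + ip z y.
Proof. by rewrite [ip z x]ipC [ip z y]ipC ipC ipDl rmorphD. Qed.

Lemma ip_pythagoras x y : ip x y = 0 -> ip (x + y) (x + y) = ip x x + ip y y.
Proof.
move=> xy0; have yx0 : ip y x = 0 by rewrite ipC xy0 rmorph0.
by rewrite ipDl !ipDr xy0 yx0 addr0 add0r.
Qed.

Lemma ip_ge0 x : 0 <= ip x x.
Proof. by case: hip. Qed.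

Lemma ip_eq0 x : ip x x = 0 -> x = 0.
Proof. by case: hip => _ _ _; apply. Qed.

Lemma ipnorm_ge0 x : 0 <= ipnorm ip x.
Proof. by rewrite sqrtC_ge0 ip_ge0. Qed.

Lemma ipnorm_eq0 x : ipnorm ip x = 0 -> x = 0.
Proof. by move/eqP; rewrite sqrtC_eq0 => /eqP; apply: ip_eq0. Qed.

Section OrthogonalProjection.
Variable F : V -> Prop.
Hypothesis hF : closed_subspace ip F.
Variable P : V -> V.
Hypothesis hP : orth_proj ip F P.

Lemma subspace0 : F 0.
Proof. by case: hF. Qed.

Lemma subspaceZD a x y : F x -> F y -> F (a *: x + y).
Proof. by case: hF => _ h _; apply: h. Qed.

Lemma subspaceB x y : F x -> F y -> F (x - y).
Proof. by move=> Fx Fy; rewrite addrC -scaleN1r; apply: subspaceZD. Qed.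

Lemma proj_mem x : F (P x).
Proof. by case: (hP x). Qed.

Lemma proj_orth x f : F f -> ip (x - P x) f = 0.
Proof. by case: (hP x) => _; apply. Qed.

Lemma proj_unique x f : F f -> (forall g, F g -> ip (x - f) g = 0) -> P x = f.
Proof.
move=> Ff orth_f; apply/eqP; rewrite -subr_eq0; apply/eqP/ip_eq0.
have Fd : F (P x - f) by apply: subspaceB => //; apply: proj_mem.
have -> : ip (P x - f) (P x - f) = ip ((x - f) - (x - P x)) (P x - f).
  by rewrite opprB [_ + (_ - x)]addrC addrA subrK.
by rewrite ipBl orth_f // proj_orth // subr0.
Qed.

Lemma proj_id f : F f -> P f = f.
Proof. by move=> Ff; apply: proj_unique => // g _; rewrite subrr ip0l. Qed.

Lemma proj_linear : linear P.
Proof.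
move=> a x y; apply: proj_unique => [|g Fg].
  by apply: subspaceZD; apply: proj_mem.
have -> : a *: x + y - (a *: P x + P y) = a *: (x - P x) + (y - P y).
  by rewrite scalerBr opprD addrACA.
by rewrite ipDl ipZl !proj_orth // mulr0 addr0.
Qed.

Lemma ip_proj_le x : ip (P x) (P x) <= ip x x.
Proof.
have orth : ip (P x) (x - P x) = 0 by rewrite ipC (proj_orth _ (proj_mem x)) rmorph0.
by have := ip_pythagoras orth; rewrite subrKC => ->; rewrite lerDl ip_ge0.
Qed.

End OrthogonalProjection.
End InnerProduct.

Section Operators.
Variables (C : numClosedFieldType) (U Y : lmodType C).
Variables (ipU : U -> U -> C) (ipY : Y -> Y -> C).
Hypotheses (hipU : inner_product ipU) (hipY : inner_product ipY).
Variable F : U -> Prop.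

Lemma contraction2_le w1 w2 x : contraction2_on ipU F ipY w1 w2 -> F x ->
  ipY (w1 x) (w1 x) + ipU (w2 x) (w2 x) <= ipU x x.
Proof.
case=> _ _ hw Fx; have := hw x Fx.
by rewrite /ipnorm ler_sqrtC ?nnegrE ?addr_ge0 ?ip_ge0.
Qed.

Lemma coisometry_isometric_lift T : coisometry_on ipU F ipY T ->
  forall y, exists2 x, F x & T x = y /\ ipU x x = ipY y y.
Proof.
case=> S [SF S_adj TS] y; exists (S y) => //; split=> //.
by have := S_adj (S y) y (SF y); rewrite TS.
Qed.

Lemma coisometry_on_trivial T : F 0 -> (forall y : Y, y = 0) ->
  coisometry_on ipU F ipY T.
Proof.
move=> F0 Y0; exists (fun=> 0); split=> // [x y _|y].
  by rewrite (Y0 y) !ip0r.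
by rewrite (Y0 y) (Y0 (T 0)).
Qed.

Lemma strict_contraction_coisometry_trivial T :
  strict_contraction_on ipU F ipY T -> coisometry_on ipU F ipY T ->
  forall y : Y, y = 0.
Proof.
case=> c [c_lt1 Tc] /coisometry_isometric_lift lift y.
have [x Fx [Txy ipxy]] := lift y.
have := Tc x Fx; rewrite Txy /ipnorm ipxy -/(ipnorm ipY y) => norm_le.
apply: (ipnorm_eq0 hipY).
have := ipnorm_ge0 hipY y; rewrite le0r => /orP[/eqP //|norm_gt0].
have : c * ipnorm ipY y < ipnorm ipY y by rewrite gtr_pMl.
by move/(le_lt_trans norm_le); rewrite ltxx.
Qed.

End Operators.

Section IteratedLinearMap.
Variables (K : fieldType) (V : lmodType K).

Lemma span_dependent m p (b : 'I_m -> V) (v : 'I_p -> V) :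
  (forall x, exists c : 'I_m -> K, x = \sum_(i < m) c i *: b i) -> (m < p)%N ->
  exists2 a : 'rV[K]_p, a != 0 & \sum_(k < p) a 0 k *: v k = 0.
Proof.
move=> span_b m_lt_p; have [c hc] := fin_all_exists (fun k => span_b (v k)).
pose M := \matrix_(k < p, i < m) c k i.
have : kermx M != 0.
  rewrite kermx_eq0; apply/negP => /eqP M_free; have := rank_leq_col M.
  by rewrite M_free leqNgt m_lt_p.
case/rowV0Pn => a /sub_kermxP aM a_neq0; exists a => //.
transitivity (\sum_(i < m) (a *m M) 0 i *: b i); last first.
  by rewrite aM big1 // => i _; rewrite mxE scale0r.
under eq_bigr => k _ do rewrite [v k]hc scaler_sumr.
rewrite exchange_big /=; apply: eq_bigr => i _.
rewrite mxE scaler_suml; apply: eq_bigr => k _.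
by rewrite mxE scalerA.
Qed.

Variable f : V -> V.
Hypothesis f_lin : linear f.

Lemma iter_linear k : linear (iter k f).
Proof. by elim: k => [//|k IH] a u w /=; rewrite IH f_lin. Qed.

Let iterf k := iter k f.
HB.instance Definition _ k := GRing.isLinear.Build K V V *:%R (iterf k) (iter_linear k).

Lemma iter_chain_free x n (a : 'I_n.+1 -> K) :
  iter n f x != 0 -> iter n.+1 f x = 0 ->
  \sum_(k < n.+1) a k *: iter k f x = 0 -> forall k, a k = 0.
Proof.
move=> fn_neq0 fSn_eq0 sum_eq0.
have vanish j : (n < j)%N -> iter j f x = 0.
  by move=> /subnK <-; rewrite iterD fSn_eq0 -/(iterf _) linear0.
have step (j : 'I_n.+1) : (forall k : 'I_n.+1, (k < j)%N -> a k = 0) -> a j = 0.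
  move=> a_lt; have j_le_n : (j <= n)%N by rewrite -ltnS.
  have := congr1 (iterf (n - j)) sum_eq0.
  rewrite linear_sum linear0 (bigD1 j) // big1 => [|k k_neq_j].
    rewrite Monoid.mulm1 linearZ /= /iterf -iterD subnK // => /eqP.
    by rewrite scaler_eq0 (negbTE fn_neq0) orbF => /eqP.
  rewrite linearZ /= /iterf; case: (ltngtP k j) => [k_lt_j|j_lt_k|/val_inj k_eq_j].
  - by rewrite a_lt // scale0r.
  - by rewrite -iterD vanish ?scaler0 //; lia.
  - by rewrite k_eq_j eqxx in k_neq_j.
have all_lt j (k : 'I_n.+1) : (k < j)%N -> a k = 0.
  elim: j k => [//|j IH] k; rewrite ltnS leq_eqVlt => /orP[/eqP k_eq_j|]; last exact: IH.
  by apply: step => k'; rewrite k_eq_j; apply: IH.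
by move=> k; apply: (all_lt k.+1).
Qed.

Lemma iter_neq0_lt_dim m (b : 'I_m -> V) x n :
  (forall y, exists c : 'I_m -> K, y = \sum_(i < m) c i *: b i) ->
  iter n f x != 0 -> iter n.+1 f x = 0 -> (n < m)%N.
Proof.
move=> span_b fn_neq0 fSn_eq0; rewrite ltnNge; apply/negP => m_le_n.
have [a a_neq0 sum_eq0] := span_dependent (fun k : 'I_n.+1 => iter k f x) span_b m_le_n.
move/eqP: a_neq0; apply; apply/rowP => k; rewrite mxE.
exact: iter_chain_free fn_neq0 fSn_eq0 sum_eq0 k.
Qed.

End IteratedLinearMap.

Section Compression.
Variables (C : numClosedFieldType) (U Y : lmodType C).
Variables (ipU : U -> U -> C) (ipY : Y -> Y -> C).
Hypotheses (hipU : inner_product ipU) (hipY : inner_product ipY).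
Variable F : U -> Prop.
Hypothesis hF : closed_subspace ipU F.
Variable P : U -> U.
Hypothesis hP : orth_proj ipU F P.
Variables (w1 : U -> Y) (w2 : U -> U).
Hypothesis hw : contraction2_on ipU F ipY w1 w2.

Let T z := P (w2 z).

(* [T] is only linear on [F]; precomposing with [P] gives a linear map on
   [U] that agrees with [T] on [F]. *)
Let T_ext z := T (P z).

Lemma compression_linear : linear T_ext.
Proof.
case: hw => _ w2_lin _ a x y.
have P_lin := proj_linear hipU hF hP.
by rewrite /T_ext /T P_lin w2_lin ?P_lin //; apply: (proj_mem hP).
Qed.

Lemma iter_compression_mem k x : F x -> F (iter k T x).
Proof. by case: k => //= k _; apply: (proj_mem hP). Qed.

Lemma iter_compressionE k x : F x -> iter k T x = iter k T_ext x.
Proof.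
move=> Fx; elim: k => //= k IH.
by rewrite -IH /T_ext (proj_id hipU hF hP (iter_compression_mem k Fx)).
Qed.

Lemma iter_compression_le k x : F x -> ipU (iter k T x) (iter k T x) <= ipU x x.
Proof.
move=> Fx; elim: k => //= k IH; apply: le_trans IH.
rewrite /T; apply: le_trans (ip_proj_le hipU hP _) _.
apply: le_trans (contraction2_le hipU hipY hw (iter_compression_mem k Fx)).
by rewrite lerDr ip_ge0.
Qed.

Lemma finite_dim_iter_coisometry_trivial : finite_dim U ->
  (forall n, coisometry_on ipU F ipY (fun x => w1 (iter n T x))) ->
  forall y : Y, y = 0.
Proof.
case=> m [b span_b] coiso y; apply: (ip_eq0 hipY).
have [x Fx [w1z ipxy]] := coisometry_isometric_lift (coiso m) y.
set z := iter m T x in w1z.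
have Fz : F z := iter_compression_mem m Fx.
have z_le : ipU z z <= ipY y y by rewrite -ipxy iter_compression_le.
have yz_le : ipY y y + ipU (w2 z) (w2 z) <= ipU z z.
  by rewrite -w1z; apply: (contraction2_le hipU hipY hw Fz).
have y_le : ipY y y <= ipU z z by apply: le_trans yz_le; rewrite lerDl ip_ge0.
have w2z : w2 z = 0.
  apply: (ip_eq0 hipU); apply/eqP; rewrite eq_le ip_ge0 // andbT.
  by rewrite -(lerD2l (ipY y y)) addr0 (le_trans yz_le z_le).
suff z0 : z = 0.
  by apply/eqP; rewrite eq_le ip_ge0 // andbT; rewrite z0 ip0l in y_le.
have T_ext_mSx : iter m.+1 T_ext x = 0.
  rewrite iterS -iter_compressionE // -/z /T_ext /T (proj_id hipU hF hP Fz) w2z.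
  exact: (proj_id hipU hF hP (subspace0 hF)).
apply/eqP; apply: contraT => z_neq0.
rewrite /z iter_compressionE // in z_neq0.
by have := iter_neq0_lt_dim compression_linear span_b z_neq0 T_ext_mSx; rewrite ltnn.
Qed.

End Compression.

Theorem proposition2p2 (R : realType) (U Y : lmodType R[i])
  (ipU : U -> U -> R[i]) (ipY : Y -> Y -> R[i])
  (hU : hilbert_space ipU) (hY : hilbert_space ipY)
  (F : U -> Prop) (hF : closed_subspace ipU F)
  (PiF : U -> U) (hPi : orth_proj ipU F PiF)
  (w1 : U -> Y) (w2 : U -> U) (hw : contraction2_on ipU F ipY w1 w2) :
  strict_contraction_on ipU F ipY w1 \/ finite_dim U ->
  ((forall n : nat,
      coisometry_on ipU F ipY (fun x => w1 (iter n (fun z => PiF (w2 z)) x)))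
   <-> (forall y : Y, y = 0)).
Proof.
case: hU => hipU _; case: hY => hipY _.
move=> strict_or_finite; split=> [coiso|Y0 n]; last first.
  exact: coisometry_on_trivial (subspace0 hF) Y0.
case: strict_or_finite => [strict|finite].
  by apply: (strict_contraction_coisometry_trivial hipY strict); apply: (coiso 0%N).
exact: (finite_dim_iter_coisometry_trivial hipU hipY hF hPi hw finite).
Qed.
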